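(* Let $G=\mathrm{GL}_n$ over a field $k$, acting on $G/Q$ by left multiplication. (i) If $i\in\{2,\dots,n\}$ and $g\in X_i$, then $T_1\subseteq\mathrm{Stab}_T(g)$. (ii) If $j\in\{2,\dots,n\}$ and $g\in X_{1j}$, then $T_j\subseteq\mathrm{Stab}_T(g)$. (iii) $\mathrm{Stab}_T(\mathring g)=\{1\}$.
   Context: $T$ is the diagonal torus, $B$ the upper triangular Borel, $U$ its unipotent radical, $Q$ the mirabolic subgroup of matrices whose last row is $(0,\dots,0,1)$. For $1\le j\le n$, $T_j=\{\mathrm{diag}(1,\dots,1,t_j,1,\dots,1): t_j\in k^\times\}$ (entry $t_j$ in position $j$). For $1\le i\le n$, $w_i$ is the permutation matrix of the transposition $(i\,n)$ (so $w_n=1$), and $X_i=Bw_iQ/Q$; then $G/Q=\bigsqcup_i X_i$. $E_{ij}$ are the elementary matrices, $U_{\alpha_{1j}}=\{\exp(aE_{1j})=1+aE_{1j}\}$. One has $X_1=T\big(\prod_{j=2}^nU_{\alpha_{1j}}\big)w_1Q/Q$; for $2\le j\le n$, $X_{1j}\subset X_1$ is the closed subscheme of elements whose $U_{\alpha_{1j}}$-component is trivial. Finally $\mathring g=\exp\big(\sum_{j=2}^nE_{1j}\big)w_1Q\in X_1$. *)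

(* GL_N over a field k with N = n.+1 (so N >= 1);
   paper index m in {1..N} corresponds to ordinal m-1 : 'I_n.+1,
   so paper's 1 is ord0 and paper's N is ord_max. *)
From HB Require Import structures.
From mathcomp Require Import all_boot all_order all_algebra.
Set Implicit Arguments. Unset Strict Implicit. Unset Printing Implicit Defensive.
Import GRing.Theory.
Local Open Scope ring_scope.

Definition torus (k : fieldType) (n : nat) (t : 'M[k]_n) : Prop :=
  t \in unitmx /\ forall i j : 'I_n, i != j -> t i j = 0.

Definition borel (k : fieldType) (n : nat) (b : 'M[k]_n) : Prop :=
  b \in unitmx /\ forall i j : 'I_n, (j < i)%N -> b i j = 0.

Definition mirabolic (k : fieldType) (n : nat) (q : 'M[k]_n.+1) : Prop :=
  q \in unitmx /\ forall j : 'I_n.+1, q ord_max j = (j == ord_max)%:R.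

Definition wperm (k : fieldType) (n : nat) (i : 'I_n.+1) : 'M[k]_n.+1 :=
  tperm_mx i ord_max.

Definition same_coset (k : fieldType) (n : nat) (g h : 'M[k]_n.+1) : Prop :=
  mirabolic (invmx g *m h).

Definition inX (k : fieldType) (n : nat) (i : 'I_n.+1) (g : 'M[k]_n.+1) : Prop :=
  exists b q, borel b /\ mirabolic q /\ g = b *m wperm k i *m q.

(* exp(a E_{1j}) = 1 + a E_{1j} *)
Definition Uroot (k : fieldType) (n : nat) (j : 'I_n.+1) (a : k) : 'M[k]_n.+1 :=
  1%:M + a *: delta_mx ord0 j.

(* the point gQ lies in X_{1j}: gQ = t (prod_{l>=2} exp(a_l E_{1l})) w_1 Q
   with t in T and trivial U_{alpha_{1j}}-component a_j = 0 *)
Definition inX1j (k : fieldType) (n : nat) (j : 'I_n.+1) (g : 'M[k]_n.+1) : Prop :=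
  exists (t : 'M[k]_n.+1) (a : 'I_n.+1 -> k) (q : 'M[k]_n.+1),
    [/\ torus t, a j = 0, mirabolic q &
        g = t *m (\prod_(l < n.+1 | l != ord0) Uroot l (a l)) *m wperm k ord0 *m q].

Definition Tj (k : fieldType) (n : nat) (j : 'I_n) (t : 'M[k]_n) : Prop :=
  exists c : k, c != 0 /\ t = diag_mx (\row_l (if l == j then c else 1)).

Definition stabT (k : fieldType) (n : nat) (g t : 'M[k]_n.+1) : Prop :=
  torus t /\ same_coset (t *m g) g.

(* the point g-ring = exp(sum_{j>=2} E_{1j}) w_1 Q *)
Definition gcirc (k : fieldType) (n : nat) : 'M[k]_n.+1 :=
  (1%:M + \sum_(j < n.+1 | j != ord0) delta_mx ord0 j) *m wperm k ord0.

From HB Require Import structures.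
From mathcomp Require Import all_boot all_order all_algebra.
From mathcomp Require Import perm.
Set Implicit Arguments. Unset Strict Implicit. Unset Printing Implicit Defensive.
Import GRing.Theory.
Local Open Scope ring_scope.

(* Q is the stabilizer of e_n = (0,...,0,1) under right multiplication, so
   gQ |-> v = e_n g^-1 identifies G/Q with the nonzero rows, and t in T fixes
   gQ iff v t = v, i.e. iff t_ll = 1 wherever v_l <> 0.  If g = b w_i q then
   v b = e_i, and the first column of b is b_11 e_1, so v_1 = 0 when i <> 1.
   If g = t' P w_1 q lies in X_1j then v t' P = e_1, and P fixes e_j^T because
   a_j = 0, so v_j = 0.  For g-ring, v = e_1 (1 - sum_(j>=2) E_1j) has entries
   1, -1, ..., -1, all nonzero, which forces t = 1. *)

Section ColumnSupport.
Variables (R : idomainType) (m : nat).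
Implicit Types (A : 'M[R]_m) (x : 'rV[R]_m).

Lemma col_offdiag0 A j :
  (forall i, i != j -> A i j = 0) -> col j A = A j j *: delta_mx j 0.
Proof.
move=> Aj0; apply/colP => i; rewrite !mxE eqxx andbT.
by have [->|/Aj0->] := eqVneq i j; rewrite ?mulr1 ?mulr0.
Qed.

Lemma mul_row_col_delta x A j c :
  col j A = c *: delta_mx j 0 -> (x *m A) 0 j = x 0 j * c.
Proof.
move=> Aj; have Aij i : A i j = c * (i == j)%:R.
  by have /colP/(_ i) := Aj; rewrite !mxE eqxx andbT.
rewrite mxE (bigD1 j) //= big1 => [|i /negPf ij]; last by rewrite Aij ij !mulr0.
by rewrite Aij eqxx mulr1 addr0.
Qed.

Lemma unitmx_col_delta_neq0 A j c :
  A \in unitmx -> col j A = c *: delta_mx j 0 -> c != 0.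
Proof.
move=> uA Aj; apply: contraNneq (@oner_neq0 R) => c0.
have : delta_mx j 0 = 0 :> 'cV[R]_m.
  by rewrite -(mulKmx uA (delta_mx j 0)) -colE Aj c0 scale0r mulmx0.
by move/colP/(_ j); rewrite !mxE !eqxx => /eqP.
Qed.

Lemma mul_row_col_delta_eq0 x A j c :
  A \in unitmx -> col j A = c *: delta_mx j 0 -> (x *m A) 0 j = 0 -> x 0 j = 0.
Proof.
move=> uA Aj; rewrite (mul_row_col_delta _ Aj) => /eqP.
by rewrite mulf_eq0 (negPf (unitmx_col_delta_neq0 uA Aj)) orbF => /eqP.
Qed.

End ColumnSupport.

Section CosetRow.
Variables (k : fieldType) (n : nat).
Implicit Types (g h q t : 'M[k]_n.+1) (v : 'rV[k]_n.+1).

Local Notation e_last := (delta_mx 0 ord_max : 'rV[k]_n.+1).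

Definition coset_row g : 'rV[k]_n.+1 := e_last *m invmx g.

Lemma mirabolicE q : mirabolic q <-> q \in unitmx /\ e_last *m q = e_last.
Proof.
rewrite -rowE; split=> [] [uq Mq]; split=> //.
  by apply/rowP => j; rewrite !mxE Mq eq_sym.
by move=> j; move/rowP/(_ j): Mq; rewrite !mxE eq_sym.
Qed.

Lemma coset_rowP g v : g \in unitmx -> coset_row g = v <-> v *m g = e_last.
Proof.
by move=> ug; rewrite /coset_row; split=> [<-|<-]; rewrite ?mulmxKV ?mulmxK.
Qed.

Lemma same_cosetE g h :
  g \in unitmx -> h \in unitmx -> same_coset g h <-> coset_row g = coset_row h.
Proof.
move=> ug uh; split=> [/mirabolicE[_]|Egh].
  by rewrite mulmxA => /(coset_rowP _ uh) ->.
apply/mirabolicE; rewrite unitmx_mul unitmx_inv ug uh mulmxA.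
by split=> //; apply/(coset_rowP _ uh); rewrite -Egh.
Qed.

Lemma coset_row_mulmx t g :
  t \in unitmx -> g \in unitmx -> coset_row (t *m g) = coset_row g *m invmx t.
Proof.
move=> ut ug; apply/coset_rowP; first by rewrite unitmx_mul ut ug.
by rewrite mulmxA mulmxKV // mulmxKV.
Qed.

Lemma coset_row_mulmx_mirabolic g q :
  g \in unitmx -> mirabolic q -> coset_row (g *m q) = coset_row g.
Proof.
move=> ug /mirabolicE[uq Mq]; apply/coset_rowP; first by rewrite unitmx_mul ug uq.
by rewrite mulmxA mulmxKV.
Qed.

Lemma stabTE g t :
  g \in unitmx -> stabT g t <-> torus t /\ coset_row g *m t = coset_row g.
Proof.
move=> ug; split=> -[[ut dt] Stg]; split=> //.
  have utg : t *m g \in unitmx by rewrite unitmx_mul ut ug.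
  move/(same_cosetE utg ug): Stg; rewrite coset_row_mulmx // => {1}<-.
  by rewrite mulmxKV.
have utg : t *m g \in unitmx by rewrite unitmx_mul ut ug.
by apply/(same_cosetE utg ug); rewrite coset_row_mulmx // -{1}Stg mulmxK.
Qed.

Lemma wperm_invol i : @wperm k n i *m @wperm k n i = 1%:M.
Proof. by rewrite /wperm /tperm_mx -perm_mxM tperm2 perm_mx1. Qed.

Lemma delta_mulmx_wperm i : e_last *m @wperm k n i = delta_mx 0 i.
Proof.
by rewrite -rowE; apply/rowP => j; rewrite !mxE tpermR eq_sym.
Qed.

Lemma coset_row_BwQ b i q :
  b *m @wperm k n i *m q \in unitmx -> mirabolic q ->
  coset_row (b *m @wperm k n i *m q) *m b = delta_mx 0 i.
Proof.
rewrite !unitmx_mul => /andP[/andP[ub _] _] Mq.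
have ubw : b *m @wperm k n i \in unitmx by rewrite unitmx_mul ub unitmx_perm.
rewrite coset_row_mulmx_mirabolic // -delta_mulmx_wperm -[LHS]mulmx1.
by rewrite -(wperm_invol i) !mulmxA -(mulmxA _ b) /coset_row mulmxKV.
Qed.

End CosetRow.

Section Torus.
Variables (k : fieldType) (m : nat).
Implicit Types (t : 'M[k]_m) (v : 'rV[k]_m).

Lemma torus1 : torus (1%:M : 'M[k]_m).
Proof. by split=> [|i j /negPf ij]; rewrite ?unitmx1 // mxE ij. Qed.

Lemma Tj_torus j t : Tj j t -> torus t.
Proof.
move=> [c [c0 ->]]; split=> [|i l /negPf il]; last by rewrite mxE il.
rewrite unitmxE det_diag unitfE; apply/prodf_neq0 => i _.
by rewrite mxE; case: ifP; rewrite ?oner_eq0.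
Qed.

Lemma Tj_fix_row j t v : Tj j t -> v 0 j = 0 -> v *m t = v.
Proof.
move=> [c [_ ->]] vj0; rewrite mul_mx_diag; apply/rowP => l.
by rewrite !mxE; case: eqP => [->|_]; rewrite ?vj0 ?mul0r ?mulr1.
Qed.

Lemma torus_fix_row_eq1 t v :
  torus t -> (forall l, v 0 l != 0) -> v *m t = v -> t = 1%:M.
Proof.
move=> [_ dt] v_neq0 vt; apply/matrixP => a b; rewrite mxE.
have [<-|/dt->] //= := eqVneq a b; apply: (mulfI (v_neq0 a)).
by rewrite -(mul_row_col_delta _ (col_offdiag0 (dt^~ a))) vt mulr1.
Qed.

End Torus.

Section Stabilizers.
Variables (k : fieldType) (n : nat).
Implicit Types (g t : 'M[k]_n.+1) (i j l : 'I_n.+1).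

Lemma Tj_stabT g j t : g \in unitmx -> coset_row g 0 j = 0 -> Tj j t -> stabT g t.
Proof.
move=> ug gj0 Tt; apply/(stabTE _ ug); split; first exact: Tj_torus Tt.
exact: Tj_fix_row Tt gj0.
Qed.

Lemma inX_coset_row0 i g :
  i != ord0 -> g \in unitmx -> inX i g -> coset_row g 0 ord0 = 0.
Proof.
move=> i0 ug [b [q [[ub lb] [Mq Eg]]]]; rewrite Eg in ug *.
have b0 : col ord0 b = b ord0 ord0 *: delta_mx ord0 0.
  by apply: col_offdiag0 => a a0; apply: lb; rewrite lt0n.
apply: (mul_row_col_delta_eq0 ub b0).
by rewrite coset_row_BwQ // mxE eq_sym (negPf i0) andbF.
Qed.

Lemma Uroot0 l : Uroot l 0 = 1%:M :> 'M[k]_n.+1.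
Proof. by rewrite /Uroot scale0r addr0. Qed.

Lemma col_Uroot j l (c : k) : l != j -> col j (Uroot l c) = delta_mx j 0.
Proof.
move=> /negPf lj; rewrite colE mulmxDl mul1mx -scalemxAl mul_delta_mx_cond lj.
by rewrite mulr0n scaler0 addr0.
Qed.

Lemma col_prod_Uroot j (a : 'I_n.+1 -> k) : a j = 0 ->
  col j (\prod_(l < n.+1 | l != ord0) Uroot l (a l)) = delta_mx j 0.
Proof.
move=> aj0; rewrite colE.
apply: (big_ind (fun M : 'M[k]_n.+1 => M *m delta_mx j 0 = delta_mx j 0)).
- by rewrite mul1mx.
- by move=> M N Mj Nj; rewrite -mulmxA Nj Mj.
move=> l _; rewrite -colE; have [->|lj] := eqVneq l j.
  by rewrite aj0 Uroot0 colE mul1mx.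
exact: col_Uroot.
Qed.

Lemma inX1j_coset_row0 j g :
  j != ord0 -> g \in unitmx -> inX1j j g -> coset_row g 0 j = 0.
Proof.
move=> j0 ug [t0 [a [q [[ut0 dt0] aj0 Mq Eg]]]]; rewrite Eg in ug *.
set P := \prod_(l < n.+1 | l != ord0) _ in ug *.
have Pj : col j P = 1 *: delta_mx j 0 by rewrite scale1r col_prod_Uroot.
apply: (mul_row_col_delta_eq0 ut0 (col_offdiag0 (dt0^~ j))).
rewrite -[LHS]mulr1 -(mul_row_col_delta _ Pj) -mulmxA coset_row_BwQ //.
by rewrite mxE (negPf j0) andbF.
Qed.

End Stabilizers.

Section Gcirc.
Variables (k : fieldType) (n : nat).

Local Notation E1 := (\sum_(j < n.+1 | j != ord0) delta_mx ord0 j : 'M[k]_n.+1).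

Lemma E1_sqr : E1 *m E1 = 0.
Proof.
rewrite mulmx_suml big1 // => j j0; rewrite mulmx_sumr big1 // => l _.
by rewrite mul_delta_mx_0.
Qed.

Lemma mulmx_1subE1_1addE1 : (1%:M - E1) *m (1%:M + E1) = 1%:M.
Proof. by rewrite mulmxDr mulmx1 mulmxBl mul1mx E1_sqr subr0 subrK. Qed.

Lemma gcirc_unit : gcirc k n \in unitmx.
Proof.
by rewrite unitmx_mul unitmx_perm andbT; case/mulmx1_unit: mulmx_1subE1_1addE1.
Qed.

Lemma coset_row_gcirc : coset_row (gcirc k n) = delta_mx 0 ord0 *m (1%:M - E1).
Proof.
apply/coset_rowP; first exact: gcirc_unit.
rewrite /gcirc mulmxA -(mulmxA _ _ (1%:M + E1)) mulmx_1subE1_1addE1 mulmx1.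
by rewrite -delta_mulmx_wperm -mulmxA wperm_invol mulmx1.
Qed.

Lemma coset_row_gcirc_neq0 l : coset_row (gcirc k n) 0 l != 0.
Proof.
rewrite coset_row_gcirc -rowE !mxE summxE.
have [->|l0] := eqVneq l ord0.
  by rewrite big1 ?subr0 ?oner_eq0 // => j /negPf j0; rewrite mxE eq_sym j0 andbF.
rewrite (bigD1 l) //= big1 => [|j /andP[_ /negPf jl]]; last first.
  by rewrite mxE eq_sym jl andbF.
by rewrite !mxE !eqxx addr0 sub0r oppr_eq0 oner_eq0.
Qed.

End Gcirc.

Theorem lemma8p2 (k : fieldType) (n : nat) :
  (forall (i : 'I_n.+1) (g : 'M[k]_n.+1), i != ord0 -> g \in unitmx -> inX i g ->
     forall t : 'M[k]_n.+1, Tj ord0 t -> stabT g t) /\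
  (forall (j : 'I_n.+1) (g : 'M[k]_n.+1), j != ord0 -> g \in unitmx -> inX1j j g ->
     forall t : 'M[k]_n.+1, Tj j t -> stabT g t) /\
  (forall t : 'M[k]_n.+1, stabT (gcirc k n) t <-> t = 1%:M).
Proof.
split; [|split].
- by move=> i g i0 ug Xg t; apply: Tj_stabT ug (inX_coset_row0 i0 ug Xg).
- by move=> j g j0 ug Xg t; apply: Tj_stabT ug (inX1j_coset_row0 j0 ug Xg).
move=> t; split=> [/(stabTE _ (gcirc_unit k n))[Tt fix_t] | ->].
  exact: torus_fix_row_eq1 Tt (@coset_row_gcirc_neq0 k n) fix_t.
by apply/(stabTE _ (gcirc_unit k n)); rewrite mulmx1; split; first exact: torus1.
Qed.
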